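(* Let $\lambda=\{\mathbf u_0,\dots,\mathbf u_{d-1}\}\subset\mathbb{Z}^n_{\ge0}$ be a finite downward-closed subset, enumerated so that $\mathbf u_0=0$ and each $\{\mathbf u_0,\dots,\mathbf u_k\}$ is downward closed. Define for $1\le m\le d-1$ $$W_T(\mathbf u_m)=\begin{cases}0&\text{if }\mathbf u_m=e_i\text{ for some }i,\\ \#\{(i,j):1\le i\le j\le d-1,\ \mathbf u_i+\mathbf u_j=\mathbf u_m\}-1&\text{otherwise,}\end{cases}$$ $$W_B(\mathbf u_m)=\#\{(i,j,k)\in\{1,\dots,d-1\}^3: i<k,\ \mathbf u_i+\mathbf u_j+\mathbf u_k=\mathbf u_m\}.$$ Then $W_T(\mathbf u_m)\le W_B(\mathbf u_m)$ for all $m=1,\dots,d-1$.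
   Context: A subset $\lambda\subset\mathbb{Z}^n_{\ge0}$ is downward closed if $\mathbf u\in\lambda$ and $0\le\mathbf v\le\mathbf u$ coordinatewise imply $\mathbf v\in\lambda$. $e_i$ denotes the $i$-th unit vector. (In the paper $\lambda$ arises as the largest partition of a nested partition with an enumeration compatible with the nesting.) *)

From mathcomp Require Import all_boot all_order all_algebra.
Set Implicit Arguments. Unset Strict Implicit. Unset Printing Implicit Defensive.

Definition pt (n : nat) := {ffun 'I_n -> nat}.

Definition pt0 (n : nat) : pt n := [ffun => 0%N].
Definition unitv (n : nat) (i : 'I_n) : pt n := [ffun j => (j == i : nat)].
Definition ptadd (n : nat) (u v : pt n) : pt n := [ffun j => (u j + v j)%N].
Definition ptle (n : nat) (u v : pt n) : Prop := forall j, (u j <= v j)%N.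

Definition downward_closed (n : nat) (S : pt n -> Prop) : Prop :=
  forall u v : pt n, S u -> ptle v u -> S v.

Definition prefix_set (n d : nat) (u : 'I_d -> pt n) (k : nat) : pt n -> Prop :=
  fun v => exists i : 'I_d, (i <= k)%N /\ u i = v.

Definition W_T (n d : nat) (u : 'I_d -> pt n) (m : 'I_d) : int :=
  if [exists i : 'I_n, u m == unitv i] then 0%R
  else ((#|[set p : 'I_d * 'I_d |
              [&& (1 <= p.1)%N, (p.1 <= p.2)%N & ptadd (u p.1) (u p.2) == u m]]|)%:Z
        - 1)%R.

Definition W_B (n d : nat) (u : 'I_d -> pt n) (m : 'I_d) : nat :=
  #|[set t : 'I_d * 'I_d * 'I_d |
      [&& (1 <= t.1.1)%N, (1 <= t.1.2)%N, (1 <= t.2)%N, (t.1.1 < t.2)%N &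
          ptadd (ptadd (u t.1.1) (u t.1.2)) (u t.2) == u m]]|.

From mathcomp Require Import all_boot all_order all_algebra.
From mathcomp Require Import zify.
Set Implicit Arguments. Unset Strict Implicit. Unset Printing Implicit Defensive.

(* Sort the decompositions u_m = u_i + u_j (1 <= i <= j) by the shape of the
   summands.  If both are of the form e_k or 2 e_k, the sum determines them, so
   there is at most one such pair.  Otherwise some summand is u_j = e_k + w with
   w outside {0, e_k}; e_k and w lie below u_m, hence in lambda, and
   u_m = e_k + u_i + w is a triple counted by W_B whose middle entry is i.  The
   middle entry determines the pair by cancellation, so these pairs are at most
   W_B(u_m) many. *)

Lemma leq_card_rel (T1 T2 : finType) (A : {set T1}) (B : {set T2})
    (R : T1 -> T2 -> bool) :
  (forall a, a \in A -> exists2 b, b \in B & R a b) ->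
  (forall a a' b, a \in A -> a' \in A -> R a b -> R a' b -> a = a') ->
  #|A| <= #|B|.
Proof.
move=> RA R_inj; have [->|[a0 /RA[b0 _ _]]] := set_0Vmem A; first by rewrite cards0.
pose f a := odflt b0 [pick b in B | R a b].
have fP a : a \in A -> f a \in B /\ R a (f a).
  move=> /RA[b Bb Rab]; rewrite /f.
  by case: pickP => [b' /andP[]|/(_ b)] //=; rewrite Bb Rab.
rewrite -(@card_in_imset _ _ f).
  by apply/subset_leq_card/subsetP => _ /imsetP[a /fP[Bfa _] ->].
move=> a a' Aa Aa' fE; have [_ Ra] := fP a Aa; have [_ Ra'] := fP a' Aa'.
by rewrite fE in Ra; exact: R_inj Aa Aa' Ra Ra'.
Qed.

Lemma ptaddC n (a b : pt n) : ptadd a b = ptadd b a.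
Proof. by apply/ffunP => j; rewrite !ffunE addnC. Qed.

Lemma ptaddA n (a b c : pt n) : ptadd a (ptadd b c) = ptadd (ptadd a b) c.
Proof. by apply/ffunP => j; rewrite !ffunE addnA. Qed.

Lemma ptaddI n (a : pt n) : injective (ptadd a).
Proof. by move=> b c /ffunP bc; apply/ffunP => j; move: (bc j); rewrite !ffunE => /addnI. Qed.

Lemma ptle_addr n (a b : pt n) : ptle a (ptadd a b).
Proof. by move=> j; rewrite ffunE leq_addr. Qed.

Lemma ptle_addl n (a b : pt n) : ptle b (ptadd a b).
Proof. by move=> j; rewrite ffunE leq_addl. Qed.

Lemma ptle_trans n (a b c : pt n) : ptle a b -> ptle b c -> ptle a c.
Proof. by move=> ab bc j; apply: leq_trans (ab j) (bc j). Qed.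

Lemma unitv_neq0 n (k : 'I_n) : unitv k != pt0 n.
Proof. by apply/eqP => /ffunP/(_ k); rewrite !ffunE eqxx. Qed.

Definition axis n (k : 'I_n) (c : nat) : pt n := [ffun j => if j == k then c else 0].

Lemma unitv_axis n (k : 'I_n) : unitv k = axis k 1.
Proof. by apply/ffunP => j; rewrite !ffunE; case: eqP. Qed.

(* The points e_k and 2 e_k: exactly the nonzero points that do not split as
   e_k + w with w outside {0, e_k}, see [small_axialN_split]. *)
Definition small_axial n (b : pt n) := [exists k, (b == axis k 1) || (b == axis k 2)].

Lemma small_axialP n (b : pt n) :
  reflect (exists k c, 0 < c <= 2 /\ b = axis k c) (small_axial b).
Proof.
apply: (iffP existsP) => [[k /orP[]/eqP->]|[k [c [c12 ->]]]].
- by exists k, 1.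
- by exists k, 2.
- by exists k; case: c c12 => [|[|[|c]]] // _; rewrite eqxx ?orbT.
Qed.

Lemma small_axialN_split n (b : pt n) : b != pt0 n -> ~~ small_axial b ->
  exists k w, [/\ b = ptadd (unitv k) w, w != pt0 n & w != unitv k].
Proof.
move=> b0 b_big.
have /existsP[k bk] : [exists k, 0 < b k].
  apply: contraNT b0 => /existsPn b0; apply/eqP/ffunP => j.
  by move: (b0 j); rewrite ffunE lt0n negbK => /eqP.
pose w : pt n := [ffun j => b j - (j == k)].
have bE : b = ptadd (unitv k) w.
  apply/ffunP => j; rewrite !ffunE.
  by have [->|njk] := eqVneq j k; rewrite ?eqxx ?(negbTE njk) /=; lia.
exists k, w; split=> //; apply: contra b_big => /eqP wE; apply/small_axialP.
- exists k, 1; split=> //; rewrite bE wE unitv_axis.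
  by apply/ffunP => j; rewrite !ffunE; case: eqP.
- exists k, 2; split=> //; rewrite bE wE unitv_axis.
  by apply/ffunP => j; rewrite !ffunE; case: eqP.
Qed.

Lemma small_axial_pair_unique n (a b a' b' : pt n) :
  small_axial a -> small_axial b -> small_axial a' -> small_axial b' ->
  ptadd a b = ptadd a' b' -> a = a' /\ b = b' \/ a = b' /\ b = a'.
Proof.
move=> /small_axialP[ka [ca [ca12 ->]]] /small_axialP[kb [cb [cb12 ->]]].
move=> /small_axialP[ka' [ca' [ca'12 ->]]] /small_axialP[kb' [cb' [cb'12 ->]]] /ffunP sumE.
suff : ((ka, ca) == (ka', ca')) && ((kb, cb) == (kb', cb'))
       || ((ka, ca) == (kb', cb')) && ((kb, cb) == (ka', ca')).
  by case/orP => /andP[/eqP[-> ->] /eqP[-> ->]]; [left | right].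
have coord j : (j == ka) * ca + (j == kb) * cb = (j == ka') * ca' + (j == kb') * cb'.
  by move: (sumE j); rewrite !ffunE; case: (j == ka); case: (j == kb);
     case: (j == ka'); case: (j == kb'); rewrite /= ?mul1n ?mul0n ?addn0.
have in_support k : 0 < (k == ka') * ca' + (k == kb') * cb' -> (k == ka) || (k == kb).
  by rewrite -coord; case: (k == ka); case: (k == kb).
(* Both sides have support {ka, kb}; there the coefficients, all in {1, 2},
   can only match up to the swap. *)
have ka'_in : (ka' == ka) || (ka' == kb) by apply: in_support; rewrite eqxx; lia.
have kb'_in : (kb' == ka) || (kb' == kb) by apply: in_support; rewrite eqxx; lia.
case/orP: ka'_in => /eqP ka'E; case/orP: kb'_in => /eqP kb'E; subst ka' kb'.
all: have := coord ka; have := coord kb.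
all: have [<-|nab] := eqVneq ka kb.
all: by rewrite !xpair_eqE ?eqxx ?(eq_sym kb) ?(negbTE nab) /=; lia.
Qed.

Lemma sorted_pair_swap d (a b a' b' : 'I_d) :
  a <= b -> a' <= b' -> a = b' -> b = a' -> (a, b) = (a', b').
Proof. by move=> ab a'b' abE baE; subst; rewrite (@val_inj _ _ _ a' b') //=; lia. Qed.

Section SumDecompositions.

Variables (n d : nat) (u : 'I_d -> pt n).
Hypothesis u_inj : injective u.
Hypothesis u_first : forall i : 'I_d, nat_of_ord i = 0 -> u i = pt0 n.
Variable m : 'I_d.
Hypothesis u_down : forall v, ptle v (u m) -> exists i, u i = v.

Definition sum_pairs := [set p : 'I_d * 'I_d |
  [&& 1 <= p.1, p.1 <= p.2 & ptadd (u p.1) (u p.2) == u m]].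

Definition sum_triples := [set t : 'I_d * 'I_d * 'I_d |
  [&& 1 <= t.1.1, 1 <= t.1.2, 1 <= t.2, t.1.1 < t.2 &
      ptadd (ptadd (u t.1.1) (u t.1.2)) (u t.2) == u m]].

Definition axial_pairs :=
  [set p : 'I_d * 'I_d | small_axial (u p.1) && small_axial (u p.2)].

Lemma u_eq0 (i : 'I_d) : (u i == pt0 n) = (i == 0 :> nat).
Proof.
have [i0|i_gt0] := eqVneq (i : nat) 0; first by rewrite u_first ?eqxx.
have d_gt0 : 0 < d := leq_ltn_trans (leq0n i) (ltn_ord i).
rewrite -(u_first (i := Ordinal d_gt0)) //.
by apply/eqP => /u_inj iE; rewrite iE in i_gt0.
Qed.

Lemma sum_pairs_through_eq (p p' : 'I_d * 'I_d) (y : 'I_d) :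
  p \in sum_pairs -> p' \in sum_pairs -> y \in [:: p.1; p.2] -> y \in [:: p'.1; p'.2] ->
  p = p'.
Proof.
case: p p' => [a b] [a' b']; rewrite !inE /=.
move=> /and3P[_ ab /eqP sumE] /and3P[_ a'b' /eqP sum'E].
have partnerE x x' : ptadd (u y) (u x) = ptadd (u y) (u x') -> x = x'.
  by move/ptaddI/u_inj.
have {sumE sum'E} sumE : ptadd (u a') (u b') = ptadd (u a) (u b) by rewrite sumE sum'E.
case/orP=> /eqP yE; case/orP=> /eqP y'E.
- by subst a a'; rewrite (partnerE b b').
- subst a b'; apply: sorted_pair_swap => //.
  by apply: partnerE; rewrite -sumE ptaddC.
- subst b a'; apply: sorted_pair_swap => //.
  by apply: partnerE; rewrite sumE ptaddC.
- by subst b b'; rewrite (partnerE a a') // ptaddC -sumE ptaddC.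
Qed.

Lemma sum_triples_through (y o : 'I_d) : 1 <= y -> 1 <= o -> ~~ small_axial (u o) ->
  ptadd (u y) (u o) = u m -> exists2 t, t \in sum_triples & t.1.2 == y.
Proof.
move=> y_gt0 o_gt0 uo_big sumE.
have [|k [w [uoE w0 wk]]] := small_axialN_split _ uo_big; first by rewrite u_eq0 -lt0n.
have below_m v : ptle v (u o) -> exists i, u i = v.
  by move=> vo; apply: u_down; rewrite -sumE; apply: ptle_trans vo (ptle_addl _ _).
have [x uxE] : exists x, u x = unitv k by apply: below_m; rewrite uoE; exact: ptle_addr.
have [z uzE] : exists z, u z = w by apply: below_m; rewrite uoE; exact: ptle_addl.
have x_gt0 : 0 < x by rewrite lt0n -u_eq0 uxE unitv_neq0.
have z_gt0 : 0 < z by rewrite lt0n -u_eq0 uzE.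
have sum3E : ptadd (ptadd (u x) (u y)) (u z) = u m.
  by rewrite -sumE uoE uxE uzE ptaddA (ptaddC (u y)).
have [xz|zx|/val_inj xzE] := ltngtP x z.
- by exists (x, y, z); rewrite // inE /= x_gt0 y_gt0 z_gt0 xz sum3E /=.
- exists (z, y, x); rewrite // inE /= x_gt0 y_gt0 z_gt0 zx /=.
  by rewrite -sum3E -ptaddA ptaddC (ptaddC (u y)).
- by move: wk; rewrite -uxE -uzE xzE eqxx.
Qed.

Lemma card_axial_sum_pairs : #|sum_pairs :&: axial_pairs| <= 1.
Proof.
apply/card_le1_eqP => -[a' b'] [a b]; rewrite !inE /=.
move=> /andP[/and3P[_ a'b' /eqP sum'E] /andP[a'x b'x]].
move=> /andP[/and3P[_ ab /eqP sumE] /andP[ax bx]].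
have sumsE : ptadd (u a) (u b) = ptadd (u a') (u b') by rewrite sumE sum'E.
have [[/u_inj-> /u_inj->] // | [/u_inj aE /u_inj bE]] :=
  small_axial_pair_unique ax bx a'x b'x sumsE.
exact: sorted_pair_swap.
Qed.

Lemma card_split_sum_pairs : #|sum_pairs :\: axial_pairs| <= #|sum_triples|.
Proof.
apply: (@leq_card_rel _ _ _ _ (fun p t => t.1.2 \in [:: p.1; p.2])); last first.
  by move=> p p' t /setDP[pP _] /setDP[p'P _]; exact: sum_pairs_through_eq.
move=> [a b]; rewrite !inE /= => /andP[/nandP big /and3P[a_gt0 ab /eqP sumE]].
have b_gt0 : 0 < b := leq_trans a_gt0 ab.
case: big => [ua_big|ub_big].
- have [|t tT /eqP tE] := sum_triples_through b_gt0 a_gt0 ua_big; first by rewrite ptaddC.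
  by exists t; rewrite // tE !inE eqxx orbT.
- have [t tT /eqP tE] := sum_triples_through a_gt0 b_gt0 ub_big sumE.
  by exists t; rewrite // tE !inE eqxx.
Qed.

Lemma card_sum_pairs : #|sum_pairs| <= #|sum_triples| + 1.
Proof.
rewrite -(cardsID axial_pairs sum_pairs) addnC.
by rewrite leq_add ?card_axial_sum_pairs ?card_split_sum_pairs.
Qed.

End SumDecompositions.

Theorem mainTheorem17 (n d : nat) (u : 'I_d -> pt n)
  (u_inj : injective u)
  (u_first : forall i : 'I_d, nat_of_ord i = 0%N -> u i = pt0 n)
  (u_prefix : forall k : nat, (k < d)%N -> downward_closed (prefix_set u k)) :
  forall m : 'I_d, (1 <= m)%N -> (W_T u m <= (W_B u m)%:Z)%R.
Proof.
move=> m _; rewrite /W_T /W_B; case: ifP => _ //.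
have u_down v : ptle v (u m) -> exists i, u i = v.
  move=> vm; have [|i [_ <-]] := u_prefix m (ltn_ord m) (u m) v _ vm; last by exists i.
  by exists m.
have := card_sum_pairs u_inj u_first u_down.
rewrite /sum_pairs /sum_triples; lia.
Qed.
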